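(* Let $\mathcal A,\mathcal B>0$, $\alpha,\beta\in(0,1)$, $h,\tau>0$. If $$\frac{\tau^{\alpha}(-\alpha^2+4\alpha-2)\mathcal A+\tau^{\beta}(-\beta^2+4\beta-2)\mathcal B}{h^2}\le\frac{279}{952},$$ then for every real $\theta$, with $s=\sin^2(\theta h/2)$, $$\widetilde{\mathcal P}=\Big[1-\tfrac{4}{35}s^3\Big]-4g_1^{(\alpha,\beta)}s\Big[1+\tfrac13 s+\tfrac{8}{45}s^2\Big]\ge0.$$
   Context: $\varpi_\ell^{(\sigma)}=(-1)^\ell\binom{\sigma}{\ell}$, $g_0^{(\sigma)}=\frac{1+\sigma}{2}\varpi_0^{(\sigma)}$, $g_\ell^{(\sigma)}=\frac{1+\sigma}{2}\varpi_\ell^{(\sigma)}+\frac{1-\sigma}{2}\varpi_{\ell-1}^{(\sigma)}$ ($\ell\ge1$); $\mu_\alpha=\tau^\alpha\mathcal A/h^2$, $\mu_\beta=\tau^\beta\mathcal B/h^2$, $g_\ell^{(\alpha,\beta)}=\mu_\alpha g_\ell^{(1-\alpha)}+\mu_\beta g_\ell^{(1-\beta)}$. *)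

From Stdlib Require Import Reals.
Open Scope R_scope.

Fixpoint gbinom (sigma : R) (l : nat) : R :=
  match l with
  | O => 1
  | S k => gbinom sigma k * (sigma - INR k) / INR (S k)
  end.

Definition varpi (sigma : R) (l : nat) : R := (-1) ^ l * gbinom sigma l.

Definition gcoef (sigma : R) (l : nat) : R :=
  match l with
  | O => (1 + sigma) / 2 * varpi sigma 0
  | S k => (1 + sigma) / 2 * varpi sigma l + (1 - sigma) / 2 * varpi sigma k
  end.

Definition mu (tau alpha A h : R) : R := Rpower tau alpha * A / h ^ 2.

Definition gab (A B alpha beta h tau : R) (l : nat) : R :=
  mu tau alpha A h * gcoef (1 - alpha) l + mu tau beta B h * gcoef (1 - beta) l.

From Stdlib Require Import Reals Lra Psatz.
Open Scope R_scope.

(* Since g_1^(1-a) = (-a^2 + 4a - 2)/2, the coefficient g_1^(alpha,beta) is half the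
   quantity bounded in the hypothesis, and the symbol is nonincreasing in it because
   its factor s(1 + s/3 + 8s^2/45) is nonnegative.  At the extreme value 279/952 the
   symbol factors as (1 - s)(1 + 197/476 s + 26/119 s^2), which is nonnegative for
   s = sin^2(theta h/2) in [0, 1]; the constant 279/952 is sharp at s = 1. *)

Lemma gcoef_1_compl (a : R) : gcoef (1 - a) 1 = (- a ^ 2 + 4 * a - 2) / 2.
Proof. unfold gcoef, varpi; simpl; field. Qed.

Lemma gab_1 (A B alpha beta h tau : R) :
  gab A B alpha beta h tau 1 =
  (Rpower tau alpha * (- alpha ^ 2 + 4 * alpha - 2) * A
   + Rpower tau beta * (- beta ^ 2 + 4 * beta - 2) * B) / h ^ 2 / 2.
Proof. unfold gab, mu; rewrite !gcoef_1_compl; unfold Rdiv; ring. Qed.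

Lemma sin_sqr_bound (x : R) : 0 <= sin x ^ 2 <= 1.
Proof.
  pose proof (SIN_bound x).
  split; [apply pow2_ge_0 | simpl; nra].
Qed.

Lemma symbol_extreme_factor (s : R) :
  1 - 4 / 35 * s ^ 3 - 4 * (279 / 952 / 2) * s * (1 + 1 / 3 * s + 8 / 45 * s ^ 2)
  = (1 - s) * (1 + 197 / 476 * s + 26 / 119 * s ^ 2).
Proof. field. Qed.

Lemma symbol_nonneg (g s : R) :
  g <= 279 / 952 / 2 -> 0 <= s <= 1 ->
  0 <= 1 - 4 / 35 * s ^ 3 - 4 * g * s * (1 + 1 / 3 * s + 8 / 45 * s ^ 2).
Proof.
  intros Hg [Hs0 Hs1].
  assert (Hq : 0 <= s * (1 + 1 / 3 * s + 8 / 45 * s ^ 2)) by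
    (apply Rmult_le_pos; [lra | nra]).
  assert (Hextreme : 0 <= 1 - 4 / 35 * s ^ 3
            - 4 * (279 / 952 / 2) * s * (1 + 1 / 3 * s + 8 / 45 * s ^ 2)).
  { rewrite symbol_extreme_factor; apply Rmult_le_pos; [lra | nra]. }
  nra.
Qed.

Theorem lemma9 (A B alpha beta h tau : R)
  (hA : 0 < A) (hB : 0 < B)
  (ha0 : 0 < alpha) (ha1 : alpha < 1) (hb0 : 0 < beta) (hb1 : beta < 1)
  (hh : 0 < h) (htau : 0 < tau)
  (hcond : (Rpower tau alpha * (- alpha ^ 2 + 4 * alpha - 2) * A
            + Rpower tau beta * (- beta ^ 2 + 4 * beta - 2) * B) / h ^ 2
           <= 279 / 952) :
  forall theta : R,
    let s := (sin (theta * h / 2)) ^ 2 in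
    (1 - 4 / 35 * s ^ 3)
      - 4 * gab A B alpha beta h tau 1 * s * (1 + 1 / 3 * s + 8 / 45 * s ^ 2)
    >= 0.
Proof.
  intros theta s.
  apply Rle_ge, symbol_nonneg.
  - rewrite gab_1; lra.
  - apply sin_sqr_bound.
Qed.
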